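(* Let $N\ge1$ be an integer, $d>0$, $T>0$, and $0\le s_1\le\dots\le s_N$. Let $x^*$ be the optimal solution of the (assumed feasible) problem $$\min_{x\in\mathbb{R}^{N+1}}\ \sum_{i=1}^{N+1}x_i^2$$ subject to - $\sum_{i=1}^k x_i\ge s_k+kd$ for $1\le k\le N$, - $x_i\ge 2d$ for $2\le i\le N$, - $x_{N+1}\ge d$, - $\sum_{i=1}^{N+1}x_i=T+Nd$. Then for every $2\le i\le N-1$ we have $x_i^*\ge x_{i+1}^*$. Moreover, for such $i$, $x_i^*>x_{i+1}^*$ only if $\sum_{j=1}^i x_j^*=s_i+id$.
   Context: The problem arises from age-of-information minimization for a single energy harvesting transmitter with energy arrival times $s_k$, fixed service time $d$, and session length $T$. Its objective is strictly convex, so the optimal solution is unique. *)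

(* over an abstract R : realType. Vectors x in R^(N+1) are
   represented as x : nat -> R, using only the entries x 1, ..., x (N+1). *)
From HB Require Import structures.
From mathcomp Require Import all_boot all_order all_algebra.
From mathcomp Require Import reals.
Set Implicit Arguments. Unset Strict Implicit. Unset Printing Implicit Defensive.
Import Order.TTheory GRing.Theory Num.Theory.
Local Open Scope ring_scope.

Section AoI.
Variable R : realType.

Definition aoi_obj (N : nat) (x : nat -> R) : R :=
  \sum_(1 <= i < N.+2) x i ^+ 2.

Definition aoi_feasible (N : nat) (d T : R) (s : nat -> R) (x : nat -> R) : Prop :=
  [/\ (forall k : nat, (1 <= k <= N)%N ->
         s k + k%:R * d <= \sum_(1 <= i < k.+1) x i),
      (forall i : nat, (2 <= i <= N)%N -> 2%:R * d <= x i),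
      d <= x N.+1
    & \sum_(1 <= i < N.+2) x i = T + N%:R * d].

Definition aoi_optimal (N : nat) (d T : R) (s : nat -> R) (x : nat -> R) : Prop :=
  aoi_feasible N d T s x /\
  forall y : nat -> R, aoi_feasible N d T s y -> aoi_obj N x <= aoi_obj N y.

End AoI.

From HB Require Import structures.
From mathcomp Require Import all_boot all_order all_algebra.
From mathcomp Require Import reals.
From mathcomp Require Import zify ring lra.
Set Implicit Arguments. Unset Strict Implicit. Unset Printing Implicit Defensive.
Import Order.TTheory GRing.Theory Num.Theory.
Local Open Scope ring_scope.

(* An exchange argument.  Moving an amount [e] from coordinate i+1 to
   coordinate i changes only the i-th prefix sum (by e) and changes the
   objective by 2e(x_i - x_(i+1) + e).  If x_i < x_(i+1), moving half the gap
   keeps every constraint and strictly decreases the objective; if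
   x_i > x_(i+1) while the i-th prefix constraint is slack, moving a small
   amount the other way does. *)

Lemma sum_nat_mulrb (V : nmodType) (c : V) (i m n : nat) :
  \sum_(m <= j < n) c *+ (j == i) = c *+ (m <= i < n)%N.
Proof.
under eq_bigr => j _ do rewrite mulrb.
by rewrite -big_mkcond big_nat1_eq mulrb.
Qed.

Section Transfer.
Variable R : realType.
Implicit Types (x : nat -> R) (e : R).

Definition transfer x (i : nat) e : nat -> R :=
  fun j => x j + e *+ (j == i) - e *+ (j == i.+1).

Lemma sum_transfer x i e m n :
  \sum_(m <= j < n) transfer x i e j =
  \sum_(m <= j < n) x j + e *+ (m <= i < n)%N - e *+ (m <= i.+1 < n)%N.
Proof. by rewrite !big_split /= sumrN !sum_nat_mulrb. Qed.

Lemma sum_sqr_transfer x i e m n : (m <= i)%N -> (i.+1 < n)%N ->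
  \sum_(m <= j < n) transfer x i e j ^+ 2 =
  \sum_(m <= j < n) x j ^+ 2 + 2 * e * (x i - x i.+1 + e).
Proof.
move=> lemi ltin.
have sqr_transfer j : transfer x i e j ^+ 2 =
    x j ^+ 2 + (2 * e * x i + e ^+ 2) *+ (j == i)
             - (2 * e * x i.+1 - e ^+ 2) *+ (j == i.+1).
  rewrite /transfer; have [->|neji] := eqVneq j i.
    by rewrite (ltn_eqF (ltnSn i)) /=; ring.
  by have [->|_] := eqVneq j i.+1; rewrite /=; ring.
under eq_bigr => j _ do rewrite sqr_transfer.
rewrite !big_split /= sumrN !sum_nat_mulrb.
have -> : (m <= i < n)%N by lia.
have -> : (m <= i.+1 < n)%N by lia.
by rewrite /=; ring.
Qed.

Lemma transfer_feasible N d T s x i e :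
  aoi_feasible N d T s x -> (2 <= i)%N -> (i.+1 <= N)%N ->
  2%:R * d <= x i + e -> 2%:R * d <= x i.+1 - e ->
  s i + i%:R * d <= \sum_(1 <= j < i.+1) x j + e ->
  aoi_feasible N d T s (transfer x i e).
Proof.
case=> prefix_ge x_ge2d xN1_ge sum_eq le2i ltiN xi_ge xi1_ge prefix_i_ge.
have transfer_id j : j != i -> j != i.+1 -> transfer x i e j = x j.
  by move=> /negbTE neji /negbTE neji1; rewrite /transfer neji neji1 addr0 subr0.
split.
- move=> k lek; rewrite sum_transfer.
  have [->|neki] := eqVneq k i.
    have -> : (1 <= i < i.+1)%N by lia.
    by rewrite ltnn andbF subr0.
  have -> : (1 <= i.+1 < k.+1)%N = (1 <= i < k.+1)%N by lia.
  by rewrite addrK prefix_ge.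
- move=> j lej; have [->|neji] := eqVneq j i.
    by rewrite /transfer eqxx (ltn_eqF (ltnSn i)) subr0.
  have [->|neji1] := eqVneq j i.+1; last by rewrite transfer_id ?x_ge2d.
  by rewrite /transfer eqxx (gtn_eqF (ltnSn i)) addr0.
- by rewrite transfer_id //; apply/eqP; lia.
- rewrite sum_transfer.
  have -> : (1 <= i < N.+2)%N by lia.
  have -> : (1 <= i.+1 < N.+2)%N by lia.
  by rewrite addrK.
Qed.

End Transfer.

Section OptimalSolution.
Variables (R : realType) (N : nat) (d T : R) (s x : nat -> R) (i : nat).
Hypotheses (x_opt : aoi_optimal N d T s x) (le2i : (2 <= i)%N) (ltiN : (i.+1 <= N)%N).

Let x_feas : aoi_feasible N d T s x. Proof. by case: x_opt. Qed.

Lemma optimal_transfer_ge0 e :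
  2%:R * d <= x i + e -> 2%:R * d <= x i.+1 - e ->
  s i + i%:R * d <= \sum_(1 <= j < i.+1) x j + e ->
  0 <= e * (x i - x i.+1 + e).
Proof.
move=> xi_ge xi1_ge prefix_ge.
have := x_opt.2 _ (transfer_feasible x_feas le2i ltiN xi_ge xi1_ge prefix_ge).
rewrite /aoi_obj sum_sqr_transfer; [|lia..].
by rewrite -lerBlDl subrr -mulrA pmulr_rge0.
Qed.

Let x_ge2d j : (2 <= j <= N)%N -> 2%:R * d <= x j.
Proof. by case: x_feas => _ + _ _; apply. Qed.

Let prefix_ge : s i + i%:R * d <= \sum_(1 <= j < i.+1) x j.
Proof. by case: x_feas => + _ _ _; apply; lia. Qed.

Let xi_ge : 2%:R * d <= x i. Proof. by apply: x_ge2d; lia. Qed.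
Let xi1_ge : 2%:R * d <= x i.+1. Proof. by apply: x_ge2d; lia. Qed.

Lemma optimal_nonincreasing : x i.+1 <= x i.
Proof.
rewrite leNgt; apply/negP => lt_xi.
pose e := (x i.+1 - x i) / 2.
have e_gt0 : 0 < e by rewrite /e; lra.
have : 0 <= e * (x i - x i.+1 + e).
  by apply: optimal_transfer_ge0; move: xi_ge prefix_ge; rewrite /e; lra.
have -> : x i - x i.+1 + e = - e by rewrite /e; field.
by rewrite mulrN oppr_ge0 leNgt (mulr_gt0 e_gt0 e_gt0).
Qed.

Lemma optimal_prefix_tight :
  x i.+1 < x i -> \sum_(1 <= j < i.+1) x j = s i + i%:R * d.
Proof.
move=> lt_xi; apply/eqP; rewrite eq_le prefix_ge andbT leNgt; apply/negP => slack.
pose e := Num.min ((x i - x i.+1) / 2) (\sum_(1 <= j < i.+1) x j - (s i + i%:R * d)).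
have e_gt0 : 0 < e by rewrite lt_min; apply/andP; split; lra.
have e_le_gap : e <= (x i - x i.+1) / 2 by rewrite ge_min lexx.
have e_le_slack : e <= \sum_(1 <= j < i.+1) x j - (s i + i%:R * d).
  by rewrite ge_min lexx orbT.
have : 0 <= - e * (x i - x i.+1 + - e).
  by apply: optimal_transfer_ge0; move: xi_ge xi1_ge; lra.
by rewrite mulNr oppr_ge0 pmulr_rle0 //; lra.
Qed.

End OptimalSolution.

Theorem lemma1 (R : realType) (N : nat) (d T : R) (s : nat -> R) (xs : nat -> R) :
  (1 <= N)%N -> 0 < d -> 0 < T ->
  0 <= s 1%N -> (forall k : nat, (1 <= k < N)%N -> s k <= s k.+1) ->
  aoi_optimal N d T s xs ->
  forall i : nat, (2 <= i <= N.-1)%N ->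
    xs i.+1 <= xs i /\
    (xs i.+1 < xs i -> \sum_(1 <= j < i.+1) xs j = s i + i%:R * d).
Proof.
move=> _ _ _ _ _ xs_opt i /andP[le2i leiN].
have ltiN : (i.+1 <= N)%N by lia.
split; first exact: optimal_nonincreasing xs_opt le2i ltiN.
exact: optimal_prefix_tight xs_opt le2i ltiN.
Qed.
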